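(* Let $M\ge 2$ and $d\ge 2$ be integers, and let $\{p(a,b,c|x,y,z)\}$ be any tripartite nonsignalling probability distribution in which each of the three parties $A,B,C$ chooses one of $M$ measurements, $A_x,B_y,C_z$ with $x,y,z\in\{1,\dots,M\}$, each having $d$ outcomes labelled by $\{0,1,\dots,d-1\}$ (identified with $\mathbb{Z}_d$). Then for every pair $i,j\in\{1,\dots,M\}$ and for $X$ denoting either $A$ or $B$, $$I^{2,M,d}_{AB}+\langle[X_i-C_j]\rangle+\langle[C_j-X_i]\rangle\ \ge\ d-1,$$ where $$I^{2,M,d}_{AB}=\sum_{\alpha=1}^{M}\Big(\langle[A_\alpha-B_\alpha]\rangle+\langle[B_\alpha-A_{\alpha+1}]\rangle\Big),$$ with the convention that $A_{M+1}$ denotes the variable $[A_1+1]$ (so the term $\langle[B_M-A_{M+1}]\rangle$ equals $\langle[B_M-A_1-1]\rangle$).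
   Context: For a random variable $\Omega$ built as an integer linear combination of outcomes, $[\Omega]$ denotes $\Omega$ modulo $d$, and $\langle[\Omega]\rangle=\sum_{i=0}^{d-1} i\,P([\Omega]=i)$. Each such expectation is computed from the (well-defined, by no-signalling) marginal joint distribution of the two measurements involved; e.g. $\langle[A_\alpha-B_\alpha]\rangle$ uses $p(a,b|x=\alpha,y=\alpha)$ and $\langle[X_i-C_j]\rangle$ uses the marginal distribution of the outcomes of $X_i$ and $C_j$. Nonsignalling means that the marginal distribution of any subset of parties does not depend on the measurement choices of the remaining parties. *)

From mathcomp Require Import all_boot all_order all_algebra.
Set Implicit Arguments. Unset Strict Implicit. Unset Printing Implicit Defensive.
Import Order.TTheory GRing.Theory Num.Theory.
Local Open Scope ring_scope.

(* A tripartite behaviour: p x y z a b c = p(a,b,c|x,y,z), measurement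
   settings in 'I_M (0-based: paper's setting k is k-1 here),
   outcomes in 'I_d identified with Z_d. *)
Definition behaviour (R : realFieldType) (M d : nat) :=
  'I_M -> 'I_M -> 'I_M -> 'I_d -> 'I_d -> 'I_d -> R.

(* probability distribution for each choice of settings, and nonsignalling:
   the marginal of every pair of parties does not depend on the setting of
   the remaining party (single-party marginals then follow). *)
Definition nonsignalling (R : realFieldType) (M d : nat) (p : behaviour R M d) : Prop :=
  (forall x y z a b c, 0 <= p x y z a b c) /\
  (forall x y z, \sum_(a < d) \sum_(b < d) \sum_(c < d) p x y z a b c = 1) /\
  (forall x y z z' a b, \sum_(c < d) p x y z a b c = \sum_(c < d) p x y z' a b c) /\
  (forall x y y' z a c, \sum_(b < d) p x y z a b c = \sum_(b < d) p x y' z a b c) /\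
  (forall x x' y z b c, \sum_(a < d) p x y z a b c = \sum_(a < d) p x' y z a b c).

(* two-party marginals; the setting of the third party is arbitrary
   (well defined by nonsignalling), we take it equal to the first setting. *)
Definition margAB (R : realFieldType) M d (p : behaviour R M d) (x y : 'I_M) (a b : 'I_d) : R :=
  \sum_(c < d) p x y x a b c.
Definition margAC (R : realFieldType) M d (p : behaviour R M d) (x z : 'I_M) (a c : 'I_d) : R :=
  \sum_(b < d) p x x z a b c.
Definition margBC (R : realFieldType) M d (p : behaviour R M d) (y z : 'I_M) (b c : 'I_d) : R :=
  \sum_(a < d) p y y z a b c.

Definition modd (d : nat) (w : int) : nat := `|(w %% (d%:Z))%Z|%N.

Definition expmod (R : realFieldType) d (q : 'I_d -> 'I_d -> R) (f : int -> int -> int) : R :=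
  \sum_(u < d) \sum_(v < d) (modd d (f (nat_of_ord u)%:Z (nat_of_ord v)%:Z))%:R * q u v.

(* In 0-based indexing, alpha+1 is ordS alpha and
   the extra "-1" appears exactly when alpha is the last index. *)
Definition I_AB (R : realFieldType) M d (p : behaviour R M d) : R :=
  \sum_(al < M)
    (expmod (margAB p al al) (fun a b => a - b) +
     expmod (fun b a => margAB p (ordS al) al a b)
            (fun b a => b - a - (nat_of_ord al == M.-1)%:Z)).

From mathcomp Require Import all_boot all_order all_algebra.
From mathcomp Require Import zify ring lra.
Import Order.TTheory GRing.Theory Num.Theory.
Set Implicit Arguments. Unset Strict Implicit. Unset Printing Implicit Defensive.
Local Open Scope ring_scope.

(* Write D_x(t) = <[A_x - C_j - t]> and E_x(t) = <[B_x - C_j - t]>.  Since [.] is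
   subadditive and, by nonsignalling, any two of these expectations can be read
   off a single joint distribution, D_x(t) <= <[A_x - B_x]> + E_x(t) and
   E_x(t + e) <= <[B_x - A_(x+1) - e]> + D_(x+1)(t), where e = 1 exactly at the
   wrap-around x = M.  Going once around the cycle with the shift t = 1 switched
   on from index i onwards telescopes to D_i(1) <= I_AB + D_i(0), and similarly
   E_i(1) <= I_AB + E_i(0).  Finally [A_i - C_j - 1] + [C_j - A_i] >= [-1] = d - 1. *)

Lemma leq_modd_add d (x y z : int) : x = y + z -> (modd d x <= modd d y + modd d z)%N.
Proof.
move=> ->{x}; rewrite /modd; have [->|d_neq0] := eqVneq d 0%N; first by rewrite !modz0; lia.
have dz_gt0 : 0 < d%:Z by rewrite ltz_nat lt0n.
have dz_neq0 : d%:Z != 0 by rewrite gt_eqF.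
have := modz_ge0 y dz_neq0; have := modz_ge0 z dz_neq0.
have := modz_ge0 (y + z) dz_neq0.
rewrite -modzDm; set r := (_ + _)%R; have := divz_eq r d.
have : 0 <= (r %/ d)%Z by rewrite divz_ge0 // addr_ge0 ?modz_ge0.
lia.
Qed.

Lemma modd_N1 d : (0 < d)%N -> modd d (-1) = d.-1.
Proof. by move=> d_gt0; rewrite /modd -[-1]/(Negz 0) modNz_nat // mod0n; lia. Qed.

Lemma leq_ordS M (i a : 'I_M) :
  (i <= a)%N = ((a == M.-1 :> nat) + (i < ordS a))%N :> nat.
Proof.
have a_lt := ltn_ord a; have i_lt := ltn_ord i.
rewrite /ordS /=; case: eqP => [->|a_neq].
  have M_gt0 : (0 < M)%N by apply: leq_ltn_trans i_lt.
  by rewrite prednK // modnn ltn0 -ltnS prednK // i_lt.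
by rewrite modn_small ?ltnS //; lia.
Qed.

Lemma telescope_le (R : realDomainType) M (i : 'I_M) (F : 'I_M -> nat -> R)
    (c : 'I_M -> R) :
  (forall a, F a (i <= a)%N <= c a + F (ordS a) (i < ordS a)%N) ->
  F i 1%N <= \sum_a c a + F i 0%N.
Proof.
move=> F_le.
have sum_le : \sum_a F a (i <= a)%N <= \sum_a c a + \sum_a F a (i < a)%N.
  rewrite [X in _ + X](reindex_inj (@ordS_inj M)) -big_split.
  exact: ler_sum.
have sum_shift : \sum_a F a (i <= a)%N = \sum_a F a (i < a)%N + F i 1%N - F i 0%N.
  rewrite (bigD1 i) // [in RHS](bigD1 i) //= leqnn ltnn.
  rewrite (eq_bigr (fun a => F a (i < a)%N)); last first.
    by move=> a a_neq; rewrite ltn_neqAle eq_sym a_neq.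
  set S := \sum_(_ | _) _.
  by rewrite -[F i true]/(F i 1%N) -[F i false]/(F i 0%N); ring.
lra.
Qed.

Lemma eq_expmod (R : realFieldType) d (q : 'I_d -> 'I_d -> R) (f g : int -> int -> int) :
  (forall u v, f u v = g u v) -> expmod q f = expmod q g.
Proof. by move=> fg; apply: eq_bigr => u _; apply: eq_bigr => v _; rewrite fg. Qed.

Lemma expmod_swap (R : realFieldType) d (q : 'I_d -> 'I_d -> R) (f : int -> int -> int) :
  expmod (fun v u => q u v) f = expmod q (fun u v => f v u).
Proof. by rewrite /expmod exchange_big. Qed.

Section NonsignallingBehaviour.

Variables (R : realFieldType) (M d : nat) (p : behaviour R M d).
Hypothesis p_ns : nonsignalling p.

Let p_ge0 : forall x y z a b c, 0 <= p x y z a b c := proj1 p_ns.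
Let p_sum1 : forall x y z, \sum_(a < d) \sum_(b < d) \sum_(c < d) p x y z a b c = 1 :=
  proj1 (proj2 p_ns).
Let p_nsC := proj1 (proj2 (proj2 p_ns)).
Let p_nsB := proj1 (proj2 (proj2 (proj2 p_ns))).
Let p_nsA := proj2 (proj2 (proj2 (proj2 p_ns))).

Definition expect x y z (f : 'I_d -> 'I_d -> 'I_d -> nat) : R :=
  \sum_(a < d) \sum_(b < d) \sum_(c < d) (f a b c)%:R * p x y z a b c.

Lemma expect_le_add x y z (f g h : 'I_d -> 'I_d -> 'I_d -> nat) :
  (forall a b c, f a b c <= g a b c + h a b c)%N ->
  expect x y z f <= expect x y z g + expect x y z h.
Proof.
move=> fgh; rewrite -big_split; apply: ler_sum => a _.
rewrite -big_split; apply: ler_sum => b _; rewrite -big_split; apply: ler_sum => c _.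
by rewrite /= -mulrDl -natrD ler_wpM2r ?p_ge0 // ler_nat.
Qed.

Lemma expect_cst x y z k : expect x y z (fun _ _ _ => k) = k%:R.
Proof.
rewrite -[RHS]mulr1 -[X in _ * X](p_sum1 x y z) mulr_sumr; apply: eq_bigr => a _.
by rewrite mulr_sumr; apply: eq_bigr => b _; rewrite mulr_sumr.
Qed.

Lemma expmod_margAB x y z (g : int -> int -> int) :
  expmod (margAB p x y) g = expect x y z (fun a b _ => modd d (g a b)).
Proof.
apply: eq_bigr => a _; apply: eq_bigr => b _.
by rewrite /margAB (p_nsC _ _ x z) mulr_sumr.
Qed.

Lemma expmod_margAC x y z (g : int -> int -> int) :
  expmod (margAC p x z) g = expect x y z (fun a _ c => modd d (g a c)).
Proof.
apply: eq_bigr => a _; rewrite [RHS]exchange_big; apply: eq_bigr => c _.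
by rewrite /margAC (p_nsB _ x y) mulr_sumr.
Qed.

Lemma expmod_margBC x y z (g : int -> int -> int) :
  expmod (margBC p y z) g = expect x y z (fun _ b c => modd d (g b c)).
Proof.
rewrite /expect exchange_big; apply: eq_bigr => b _; rewrite [RHS]exchange_big.
by apply: eq_bigr => c _; rewrite /margBC (p_nsA y x) mulr_sumr.
Qed.

Definition distAC j x (t : nat) := expmod (margAC p x j) (fun a c => a - c - t%:Z).
Definition distBC j y (t : nat) := expmod (margBC p y j) (fun b c => b - c - t%:Z).

Lemma distAC_0 j x : distAC j x 0 = expmod (margAC p x j) (fun a c => a - c).
Proof. by apply: eq_expmod => a c; rewrite subr0. Qed.

Lemma distBC_0 j y : distBC j y 0 = expmod (margBC p y j) (fun b c => b - c).
Proof. by apply: eq_expmod => b c; rewrite subr0. Qed.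

Lemma distAC_le j x t :
  distAC j x t <= expmod (margAB p x x) (fun a b => a - b) + distBC j x t.
Proof.
rewrite /distAC /distBC (expmod_margAC x x) (expmod_margAB _ _ j) (expmod_margBC x).
apply: expect_le_add => a b c.
by apply: leq_modd_add; ring.
Qed.

Lemma distBC_le j x t :
  distBC j x ((x == M.-1 :> nat) + t) <=
    expmod (fun b a => margAB p (ordS x) x a b) (fun b a => b - a - (x == M.-1 :> nat)%:Z)
    + distAC j (ordS x) t.
Proof.
rewrite expmod_swap /distAC /distBC (expmod_margAC (ordS x) x).
rewrite (expmod_margAB _ _ j) (expmod_margBC (ordS x)).
apply: expect_le_add => a b c.
by apply: leq_modd_add; rewrite PoszD; ring.
Qed.

Lemma distAC_le_I_AB j i : distAC j i 1 <= I_AB p + distAC j i 0.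
Proof.
apply: (telescope_le (F := distAC j)) => a; rewrite leq_ordS.
have := distAC_le j a ((a == M.-1 :> nat) + (i < ordS a)%N).
have := distBC_le j a (i < ordS a)%N.
lra.
Qed.

Lemma distBC_le_I_AB j i : distBC j i 1 <= I_AB p + distBC j i 0.
Proof.
set LA := fun a => expmod (margAB p a a) (fun a b => a - b).
set LB := fun a : 'I_M => expmod (fun b a' => margAB p (ordS a) a a' b)
  (fun b a' => b - a' - (a == M.-1 :> nat)%:Z).
have -> : I_AB p = \sum_a (LB a + LA (ordS a)).
  by rewrite /I_AB !big_split /= addrC; congr (_ + _); apply: reindex_inj; apply: ordS_inj.
apply: (telescope_le (F := distBC j)) => a; rewrite leq_ordS.
have := distBC_le j a (i < ordS a)%N.
have := distAC_le j (ordS a) (i < ordS a)%N.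
rewrite /LA /LB; lra.
Qed.

Lemma distAC_cycle (d_gt0 : (0 < d)%N) i j :
  (d.-1)%:R <= distAC j i 1 + expmod (fun c a => margAC p i j a c) (fun c a => c - a).
Proof.
rewrite expmod_swap /distAC !(expmod_margAC i i) -(modd_N1 d_gt0) -(expect_cst i i j).
apply: expect_le_add => a _ c.
by apply: leq_modd_add; ring.
Qed.

Lemma distBC_cycle (d_gt0 : (0 < d)%N) i j :
  (d.-1)%:R <= distBC j i 1 + expmod (fun c b => margBC p i j b c) (fun c b => c - b).
Proof.
rewrite expmod_swap /distBC !(expmod_margBC i i) -(modd_N1 d_gt0) -(expect_cst i i j).
apply: expect_le_add => _ b c.
by apply: leq_modd_add; ring.
Qed.

End NonsignallingBehaviour.

Theorem theorem1 (R : realFieldType) (M d : nat) (hM : (2 <= M)%N) (hd : (2 <= d)%N)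
  (p : behaviour R M d) (hp : nonsignalling p) (i j : 'I_M) :
  (* X = A *)
  (I_AB p + expmod (margAC p i j) (fun a c => a - c)
          + expmod (fun c a => margAC p i j a c) (fun c a => c - a) >= (d.-1)%:R)
  /\
  (* X = B *)
  (I_AB p + expmod (margBC p i j) (fun b c => b - c)
          + expmod (fun c b => margBC p i j b c) (fun c b => c - b) >= (d.-1)%:R).
Proof.
have d_gt0 : (0 < d)%N by apply: ltnW.
split.
- have := distAC_le_I_AB hp j i; have := distAC_cycle hp d_gt0 i j.
  rewrite distAC_0; lra.
- have := distBC_le_I_AB hp j i; have := distBC_cycle hp d_gt0 i j.
  rewrite distBC_0; lra.
Qed.
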